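(* Let $\mathcal{G}$ be a group prevariety over a finite alphabet $A$. Then $\mathit{SF}(\mathcal{G}) = \mathrm{FO}(<,\mathbb{P}_{\mathcal{G}})$.
   Context: Fix a finite alphabet $A$. A prevariety is a class of regular languages over $A$ containing $\emptyset$ and $A^*$, closed under union, intersection, complement, and under the quotients $u^{-1}L=\{w\mid uw\in L\}$ and $Lu^{-1}=\{w\mid wu\in L\}$. A group prevariety is a prevariety all of whose languages are recognized by morphisms into finite groups. $\mathit{SF}(\mathcal{G})$ is the least class containing $\mathcal{G}$ and all $\{a\}$ ($a\in A$), closed under union, complement and concatenation. A word $w=a_1\cdots a_n$ is viewed as a structure with domain $\{0,\dots,n+1\}$; positions $1,\dots,n$ are labeled $a_1,\dots,a_n$ and $0,n+1$ unlabeled; for $i<j$, $w(i,j)=a_{i+1}\cdots a_{j-1}$. First-order formulas use variables over positions, constants $\mathit{min},\mathit{max}$ (interpreted as $0$, $n+1$), equality, the signature's predicates, Boolean connectives and quantifiers. Label predicates $a(x)$ hold iff position $x$ has label $a$. $\mathrm{FO}(<,\mathbb{P}_{\mathcal{G}})$ is the class of languages defined by first-order sentences using the label predicates, the linear order $<$ on positions, and the unary predicates $P_L$ for $L\in\mathcal{G}$, where $P_L(i)$ holds iff $0<i$ and $w(0,i)\in L$. *)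

From mathcomp Require Import all_boot all_fingroup.
Set Implicit Arguments. Unset Strict Implicit. Unset Printing Implicit Defensive.

Section Langs.
Variable A : finType.

Definition lang := seq A -> Prop.

Definition regular (L : lang) : Prop :=
  exists (Q : finType) (delta : Q -> A -> Q) (q0 : Q) (F : pred Q),
    forall w, L w <-> F (foldl delta q0 w).

Definition lang_empty : lang := fun _ => False.
Definition lang_full : lang := fun _ => True.
Definition lang_union (L1 L2 : lang) : lang := fun w => L1 w \/ L2 w.
Definition lang_inter (L1 L2 : lang) : lang := fun w => L1 w /\ L2 w.
Definition lang_compl (L : lang) : lang := fun w => ~ L w.
Definition lquot (u : seq A) (L : lang) : lang := fun w => L (u ++ w).
Definition rquot (L : lang) (u : seq A) : lang := fun w => L (w ++ u).
Definition lang_concat (L1 L2 : lang) : lang :=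
  fun w => exists u v, w = u ++ v /\ L1 u /\ L2 v.
Definition lang_letter (a : A) : lang := fun w => w = [:: a].

Definition prevariety (G : lang -> Prop) : Prop :=
  (forall L, G L -> regular L) /\
  G lang_empty /\ G lang_full /\
  (forall L1 L2, G L1 -> G L2 -> G (lang_union L1 L2)) /\
  (forall L1 L2, G L1 -> G L2 -> G (lang_inter L1 L2)) /\
  (forall L, G L -> G (lang_compl L)) /\
  (forall u L, G L -> G (lquot u L)) /\
  (forall u L, G L -> G (rquot L u)).

(* L is recognized by a morphism A^* -> gT into a finite group
   (a monoid morphism from the free monoid is determined by the images
   of the letters). *)
Definition group_recognized (L : lang) : Prop :=
  exists (gT : finGroupType) (h : A -> gT) (S : {set gT}),
    forall w, L w <-> ((\prod_(a <- w) h a)%g \in S).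

Definition group_prevariety (G : lang -> Prop) : Prop :=
  prevariety G /\ (forall L, G L -> group_recognized L).

Inductive SF (G : lang -> Prop) : lang -> Prop :=
| SF_base L : G L -> SF G L
| SF_letter a : SF G (lang_letter a)
| SF_union L1 L2 : SF G L1 -> SF G L2 -> SF G (lang_union L1 L2)
| SF_compl L : SF G L -> SF G (lang_compl L)
| SF_concat L1 L2 : SF G L1 -> SF G L2 -> SF G (lang_concat L1 L2).

Inductive term : Type :=
| TVar of nat
| TMin
| TMax.

Inductive formula : Type :=
| FTrue
| FFalse
| FLabel of A & term
| FLt of term & term
| FEq of term & term
| FPred of lang & term
| FNot of formula
| FAnd of formula & formula
| FOr of formula & formula
| FImp of formula & formula
| FExists of nat & formula
| FForall of nat & formula.

(* Positions of w are 0 .. size w + 1; min = 0, max = size w + 1. *)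
Definition eval_term (w : seq A) (nu : nat -> nat) (t : term) : nat :=
  match t with
  | TVar x => nu x
  | TMin => 0
  | TMax => (size w).+1
  end.

Definition upd (nu : nat -> nat) (x i : nat) : nat -> nat :=
  fun y => if y == x then i else nu y.

Fixpoint sat (w : seq A) (nu : nat -> nat) (f : formula) : Prop :=
  match f with
  | FTrue => True
  | FFalse => False
  | FLabel a t =>
      let i := eval_term w nu t in
      0 < i <= size w /\ nth a w i.-1 = a
  | FLt t1 t2 => eval_term w nu t1 < eval_term w nu t2
  | FEq t1 t2 => eval_term w nu t1 = eval_term w nu t2
  | FPred L t =>
      let i := eval_term w nu t in
      (* P_L(i) iff 0 < i and w(0,i) = a_1 ... a_{i-1} is in L *)
      0 < i /\ L (take i.-1 w)
  | FNot g => ~ sat w nu g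
  | FAnd g h => sat w nu g /\ sat w nu h
  | FOr g h => sat w nu g \/ sat w nu h
  | FImp g h => sat w nu g -> sat w nu h
  | FExists x g => exists i, i <= (size w).+1 /\ sat w (upd nu x i) g
  | FForall x g => forall i, i <= (size w).+1 -> sat w (upd nu x i) g
  end.

Definition term_free (x : nat) (t : term) : bool :=
  if t is TVar y then y == x else false.

Fixpoint free_in (x : nat) (f : formula) : bool :=
  match f with
  | FTrue | FFalse => false
  | FLabel _ t | FPred _ t => term_free x t
  | FLt t1 t2 | FEq t1 t2 => term_free x t1 || term_free x t2
  | FNot g => free_in x g
  | FAnd g h | FOr g h | FImp g h => free_in x g || free_in x h
  | FExists y g | FForall y g => (y != x) && free_in x g
  end.

Definition sentence (f : formula) : Prop := forall x, ~~ free_in x f.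

Fixpoint preds_in (G : lang -> Prop) (f : formula) : Prop :=
  match f with
  | FPred L _ => G L
  | FNot g | FExists _ g | FForall _ g => preds_in G g
  | FAnd g h | FOr g h | FImp g h => preds_in G g /\ preds_in G h
  | _ => True
  end.

Definition FO_def (G : lang -> Prop) (L : lang) : Prop :=
  exists f : formula, sentence f /\ preds_in G f /\
    forall w, L w <-> sat w (fun _ => 0) f.

End Langs.

From HB Require Import structures.
From mathcomp Require Import all_boot all_fingroup zify.
From Stdlib Require Import FunctionalExtensionality PropExtensionality Classical ClassicalEpsilon.
Set Implicit Arguments. Unset Strict Implicit. Unset Printing Implicit Defensive.

(* SF(G) is included in FO(<, P_G): letters and Boolean operations are immediate, and a product
   L1 L2 is defined by guessing the cut and relativising the sentences of L1 and L2 to the prefix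
   and to the suffix.  A prefix predicate P_L read inside the suffix asks whether a factor v of
   the word lies in L.  As L is a group language, this only depends on the prefix u in front of
   v: if u has the same two-sided contexts in L as u0, and g is the image of u0 in the group,
   then v is in L iff u0^(#[g]-1) u v is, and both the context class of u0 and the quotient
   (u0^(#[g]-1))^-1 L belong to G.

   FO(<, P_G) is included in SF(G): fix the finitely many languages of G used by a sentence of
   quantifier depth k, and the k-round Ehrenfeucht-Fraisse equivalence whose base case is their
   two-sided context equivalence and whose rounds cut both words at a common letter.  Its classes
   are in SF(G): the base classes are Boolean combinations of quotients of languages of G, and
   the classes of round k+1 are Boolean combinations of classes of round k and of the marked
   products C b C' of such classes.  Equivalent words satisfy the same sentences of depth k, so
   the language defined by the sentence is a finite union of classes. *)


Section Profiles.
Variable A : finType.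
Implicit Types (L M O : lang A) (Ms : seq (lang A)) (u v w : seq A).

Lemma lang_ext L L' : (forall w, L w <-> L' w) -> L = L'.
Proof.
by move=> eqL; apply: functional_extensionality => w; apply: propositional_extensionality.
Qed.

Definition profile_eq Ms u v := forall M, List.In M Ms -> (M u <-> M v).

Lemma profile_eq_sym Ms u v : profile_eq Ms u v -> profile_eq Ms v u.
Proof. by move=> eq_uv M inM; apply: iff_sym; apply: eq_uv. Qed.

Lemma profile_eq_cons M Ms u v :
  profile_eq (M :: Ms) u v <-> (M u <-> M v) /\ profile_eq Ms u v.
Proof.
split=> [eq_uv | [eqM eq_uv] M' [<- // | inM']]; last exact: eq_uv.
by split=> [|M' ?]; apply: eq_uv; [left | right].
Qed.

Lemma profile_eq_app Ms Ms' u v :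
  profile_eq (List.app Ms Ms') u v <-> profile_eq Ms u v /\ profile_eq Ms' u v.
Proof.
elim: Ms => [|M Ms IH] /=; first by split=> [|[]] // eq_uv; split=> // ? [].
by rewrite !profile_eq_cons IH; tauto.
Qed.

Fixpoint atoms Ms : seq (lang A) :=
  if Ms is M :: Ms' then
    List.app (List.map (lang_inter M) (atoms Ms'))
             (List.map (lang_inter (lang_compl M)) (atoms Ms'))
  else [:: @lang_full A].

Lemma atoms_cover Ms u : exists2 O, List.In O (atoms Ms) & O u.
Proof.
elim: Ms => [|M Ms [O inO Ou]] /=; first by exists (@lang_full A); [left|].
case: (classic (M u)) => Mu.
  by exists (lang_inter M O); [apply/List.in_app_iff; left; apply: List.in_map|].
exists (lang_inter (lang_compl M) O) => //.
by apply/List.in_app_iff; right; apply: List.in_map.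
Qed.

Lemma atoms_class Ms O u v :
  List.In O (atoms Ms) -> O u -> (O v <-> profile_eq Ms u v).
Proof.
elim: Ms O => [|M Ms IH] O /=; first by case=> [<- | []] _; split=> // _ ? [].
rewrite profile_eq_cons /lang_inter /lang_compl.
by case/List.in_app_iff => /List.in_map_iff [O' [<- inO']] [Mu O'u];
  rewrite -(IH O' inO' O'u); tauto.
Qed.

Section SFClosure.
Variable G : lang A -> Prop.
Hypothesis G_empty : G (@lang_empty A).

Lemma SF_ext L L' : SF G L -> (forall w, L w <-> L' w) -> SF G L'.
Proof. by move=> SF_L /lang_ext <-. Qed.

Lemma SF_full : SF G (@lang_full A).
Proof.
have -> : @lang_full A = lang_compl (@lang_empty A) by apply: lang_ext => w; split=> // _ [].
by apply/SF_compl/SF_base.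
Qed.

Lemma SF_inter L1 L2 : SF G L1 -> SF G L2 -> SF G (lang_inter L1 L2).
Proof.
move=> SF1 SF2.
have -> : lang_inter L1 L2 = lang_compl (lang_union (lang_compl L1) (lang_compl L2)).
  apply: lang_ext => w; rewrite /lang_compl /lang_union /lang_inter.
  by split=> [|/not_or_and [/NNPP ? /NNPP ?]]; tauto.
by apply/SF_compl/SF_union; apply: SF_compl.
Qed.

Lemma SF_union_seq Os (P : lang A -> Prop) :
  (forall O, List.In O Os -> SF G O) ->
  SF G (fun w => exists O, [/\ List.In O Os, P O & O w]).
Proof.
elim: Os => [|O Os IH] SF_Os.
  by apply: SF_ext (SF_base G_empty) _ => w; split=> [[]|[? [[]]]].
have {}IH := IH (fun O' inO' => SF_Os O' (or_intror inO')).
case: (classic (P O)) => PO; last first.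
  apply: SF_ext IH _ => w; split=> [[O' [? ? ?]] | [O' [[<- | ?] ? ?]]] //.
  - by exists O'; split=> //; right.
  - by exists O'.
have SF_O : SF G O by apply: SF_Os; left.
apply: SF_ext (SF_union SF_O IH) _ => w; split=> [[Ow | [O' [? ? ?]]] | [O' [[<- | ?] ? ?]]].
- by exists O; split=> //; left.
- by exists O'; split=> //; right.
- by left.
- by right; exists O'.
Qed.

Lemma SF_atoms Ms :
  (forall M, List.In M Ms -> SF G M) -> forall O, List.In O (atoms Ms) -> SF G O.
Proof.
elim: Ms => [|M Ms IH] SF_Ms O /=; first by case=> [<- | []]; apply: SF_full.
have SF_M : SF G M by apply: SF_Ms; left.
have {}IH := IH (fun M' inM' => SF_Ms M' (or_intror inM')).
by case/List.in_app_iff => /List.in_map_iff [O' [<- /IH ?]];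
  apply: SF_inter => //; apply: SF_compl.
Qed.

Lemma SF_saturated Ms L :
  (forall M, List.In M Ms -> SF G M) ->
  (forall u v, profile_eq Ms u v -> L u -> L v) -> SF G L.
Proof.
move=> SF_Ms satL.
apply: SF_ext (SF_union_seq (fun O => exists2 u, O u & L u) (SF_atoms SF_Ms)) _ => w.
split=> [[O [inO [u Ou Lu] Ow]] | Lw].
  by apply: satL Lu; apply/(atoms_class _ inO Ou).
by have [O inO Ow] := atoms_cover Ms w; exists O; split=> //; exists w.
Qed.

End SFClosure.
End Profiles.

Lemma cat_eq_letter_split (T : Type) (u v s s' : seq T) b :
  u ++ v = s ++ b :: s' ->
  (exists s1, u = s ++ b :: s1 /\ s' = s1 ++ v) \/
  (exists s2, v = s2 ++ b :: s' /\ s = u ++ s2).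
Proof.
elim: u s => [|c u IH] s /=; first by move->; right; exists s.
case: s => [|d s] /= [-> eq_uv]; first by left; exists u; rewrite eq_uv.
by case: (IH s eq_uv) => [[s1 [-> ->]] | [s2 [-> ->]]]; [left; exists s1 | right; exists s2].
Qed.

Section EFEquivalence.
Variables (A : finType) (Pi : seq (lang A)).
Implicit Types (u v s t : seq A).

Definition ctx_eq (L : lang A) u v := forall x y, L (x ++ u ++ y) <-> L (x ++ v ++ y).

Fixpoint ef_eq k u v : Prop :=
  if k is k'.+1 then
    [/\ ef_eq k' u v,
     forall s b s', u = s ++ b :: s' ->
       exists t t', [/\ v = t ++ b :: t', ef_eq k' s t & ef_eq k' s' t'] &
     forall t b t', v = t ++ b :: t' ->
       exists s s', [/\ u = s ++ b :: s', ef_eq k' s t & ef_eq k' s' t']]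
  else forall L, List.In L Pi -> ctx_eq L u v.

Lemma ef_eq_refl k u : ef_eq k u u.
Proof.
elim: k u => [|k IH] u /=; first by [].
by split=> // s b s' ->; exists s, s'.
Qed.

Lemma ef_eq_sym k u v : ef_eq k u v -> ef_eq k v u.
Proof.
elim: k u v => [|k IH] u v /=; first by move=> eq_uv L inL x y; apply: iff_sym; apply: eq_uv.
case=> /IH eq_vu split_u split_v; split=> // [t b t' /split_v | s b s' /split_u].
  by case=> s [s' [-> /IH ? /IH ?]]; exists s, s'.
by case=> t [t' [-> /IH ? /IH ?]]; exists t, t'.
Qed.

Lemma ef_eqW m k u v : m <= k -> ef_eq k u v -> ef_eq m u v.
Proof.
elim: k => [|k IH]; first by rewrite leqn0 => /eqP ->.
by rewrite leq_eqVlt ltnS => /predU1P [-> // | /IH le_mk [/le_mk]].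
Qed.

Lemma ef_eq_cat k u u' v v' :
  ef_eq k u u' -> ef_eq k v v' -> ef_eq k (u ++ v) (u' ++ v').
Proof.
elim: k u u' v v' => [|k IH] u u' v v' /=.
  move=> eq_u eq_v L inL x y.
  by rewrite -catA (eq_u L inL x (v ++ y)) !catA -(catA (x ++ u')) (eq_v L inL (x ++ u') y) !catA.
case=> eq_u split_u split_u' [eq_v split_v split_v']; split; first exact: IH.
  move=> s b s' /(@cat_eq_letter_split _ u v) [[s1 [def_u ->]] | [s2 [def_v ->]]].
    have [t [t' [-> ? ?]]] := split_u _ _ _ def_u.
    by exists t, (t' ++ v'); rewrite -catA; split=> //; apply: IH.
  have [t [t' [-> ? ?]]] := split_v _ _ _ def_v.
  by exists (u' ++ t), t'; rewrite -catA; split=> //; apply: IH.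
move=> t b t' /(@cat_eq_letter_split _ u' v') [[s1 [def_u' ->]] | [s2 [def_v' ->]]].
  have [s [s' [-> ? ?]]] := split_u' _ _ _ def_u'.
  by exists s, (s' ++ v); rewrite -catA; split=> //; apply: IH.
have [s [s' [-> ? ?]]] := split_v' _ _ _ def_v'.
by exists (u ++ s), s'; rewrite -catA; split=> //; apply: IH.
Qed.

Lemma ef_eq_cat_letter k u u' v v' b :
  ef_eq k u u' -> ef_eq k v v' -> ef_eq k (u ++ b :: v) (u' ++ b :: v').
Proof.
move=> eq_u eq_v; rewrite -[b :: v]cat1s -[b :: v']cat1s.
by apply: ef_eq_cat => //; apply: ef_eq_cat => //; apply: ef_eq_refl.
Qed.

End EFEquivalence.

Lemma In_mem (T : eqType) (x : T) s : x \in s -> List.In x s.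
Proof. by elim: s => [|y s IH] //; rewrite inE => /predU1P [->|/IH]; [left|right]. Qed.

Section EFProfiles.
Variables (A : finType) (G : lang A -> Prop).
Hypothesis G_empty : G (@lang_empty A).
Implicit Types (C O : lang A) (Os Ms Pi : seq (lang A)) (u v s t : seq A).

Definition concat_letter C b C' := lang_concat (lang_concat C (lang_letter b)) C'.

Lemma concat_letterP C b C' u :
  concat_letter C b C' u <-> exists s s', [/\ u = s ++ b :: s', C s & C' s'].
Proof.
split=> [[_ [s' [-> [[s [_ [-> [Cs ->]]] C's']]]]] | [s [s' [-> Cs C's']]]].
  by exists s, s'; rewrite -catA.
by exists (s ++ [:: b]), s'; rewrite -catA; split=> //; split=> //; exists s, [:: b].
Qed.

Lemma SF_concat_letter C b C' : SF G C -> SF G C' -> SF G (concat_letter C b C').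
Proof. by move=> SF_C SF_C'; do 2!apply: SF_concat => //; apply: SF_letter. Qed.

Definition letter_concats Os : seq (lang A) :=
  List.flat_map (fun C => List.flat_map (fun b => List.map (concat_letter C b) Os) (enum A)) Os.

Lemma in_letter_concats Os M :
  List.In M (letter_concats Os) <->
  exists C b C', [/\ List.In C Os, List.In C' Os & M = concat_letter C b C'].
Proof.
rewrite List.in_flat_map; split.
  case=> C [inC /List.in_flat_map [b [_ /List.in_map_iff [C' [<- inC']]]]].
  by exists C, b, C'.
case=> C [b [C' [inC inC' ->]]]; exists C; split=> //.
apply/List.in_flat_map; exists b; split; first by apply: In_mem; rewrite mem_enum.
by apply/List.in_map_iff; exists C'.
Qed.

Section Successor.
Variables (Pi Ms : seq (lang A)) (k : nat).
Hypothesis eqMs : forall u v, ef_eq Pi k u v <-> profile_eq Ms u v.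

Let atom_ef_eq O s : List.In O (atoms Ms) -> O s -> forall t, O t <-> ef_eq Pi k s t.
Proof. by move=> inO Os t; rewrite eqMs; apply: atoms_class. Qed.

Let letter_concats_split u v :
  profile_eq (letter_concats (atoms Ms)) u v ->
  forall s b s', u = s ++ b :: s' ->
  exists t t', [/\ v = t ++ b :: t', ef_eq Pi k s t & ef_eq Pi k s' t'].
Proof.
move=> eq_uv s b s' def_u.
have [C inC Cs] := atoms_cover Ms s; have [C' inC' C's'] := atoms_cover Ms s'.
have /concat_letterP [t [t' [-> Ct C't']]] : concat_letter C b C' v.
  apply/(eq_uv (concat_letter C b C')); first by apply/in_letter_concats; exists C, b, C'.
  by apply/concat_letterP; exists s, s'.
by exists t, t'; split; [|apply/(atom_ef_eq inC Cs) | apply/(atom_ef_eq inC' C's')].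
Qed.

Lemma ef_eq_succ_profile u v :
  ef_eq Pi k.+1 u v <-> ef_eq Pi k u v /\ profile_eq (letter_concats (atoms Ms)) u v.
Proof.
split=> [[eq_uv split_u split_v] | [eq_uv eq_ct]].
  split=> // M /in_letter_concats [C [b [C' [inC inC' ->]]]]; rewrite !concat_letterP.
  split=> [[s [s' [/split_u [t [t' [-> st s't']]] Cs C's']]] |
           [t [t' [/split_v [s [s' [-> st s't']]] Ct C't']]]].
    by exists t, t'; split; [|apply/(atom_ef_eq inC Cs) | apply/(atom_ef_eq inC' C's')].
  exists s, s'; split=> //.
    by apply/(atom_ef_eq inC Ct); apply: ef_eq_sym.
  by apply/(atom_ef_eq inC' C't'); apply: ef_eq_sym.
split=> //; first exact: letter_concats_split.
move=> t b t' /(letter_concats_split (profile_eq_sym eq_ct)) [s [s' [-> ts t's']]].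
by exists s, s'; split=> //; apply: ef_eq_sym.
Qed.

End Successor.

Lemma ef_eq_profile Pi Ms0 :
  (forall M, List.In M Ms0 -> SF G M) ->
  (forall u v, ef_eq Pi 0 u v <-> profile_eq Ms0 u v) ->
  forall k, exists2 Ms, (forall M, List.In M Ms -> SF G M) &
    forall u v, ef_eq Pi k u v <-> profile_eq Ms u v.
Proof.
move=> SF_Ms0 base; elim=> [|k [Ms SF_Ms step]]; first by exists Ms0.
exists (List.app Ms (letter_concats (atoms Ms))).
  move=> M /List.in_app_iff [/SF_Ms // | /in_letter_concats [C [b [C' [inC inC' ->]]]]].
  by apply: SF_concat_letter; apply: (SF_atoms G_empty SF_Ms).
by move=> u v; rewrite profile_eq_app -step; apply: ef_eq_succ_profile.
Qed.

End EFProfiles.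

Lemma image_representatives (X : Type) (T : finType) (f : X -> T) :
  exists xs : seq X, forall x, exists2 x', List.In x' xs & f x' = f x.
Proof.
suff [xs xsP] : exists xs : seq X,
    forall x, f x \in enum T -> exists2 x', List.In x' xs & f x' = f x.
  by exists xs => x; apply: xsP; rewrite mem_enum.
elim: (enum T) => [|y ys [xs xsP]]; first by exists [::].
case: (classic (exists x0, f x0 = y)) => [[x0 fx0] | no_y].
  exists (x0 :: xs) => x; rewrite inE => /predU1P [-> | /xsP [x' ? ?]].
    by exists x0; [left|].
  by exists x'; [right|].
exists xs => x; rewrite inE => /predU1P [fx | /xsP //].
by case: no_y; exists x.
Qed.

Definition word_prod (A : finType) (gT : finGroupType) (h : A -> gT) (w : seq A) : gT :=
  (\prod_(a <- w) h a)%g.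

Arguments word_prod : simpl never.

Lemma word_prod_cat (A : finType) (gT : finGroupType) (h : A -> gT) u v :
  word_prod h (u ++ v) = (word_prod h u * word_prod h v)%g.
Proof. exact: big_cat. Qed.

Section GroupPrevariety.
Variables (A : finType) (G : lang A -> Prop).
Hypothesis HG : group_prevariety G.
Implicit Types (L M : lang A) (Q : seq (lang A)) (u v w x y : seq A).

Lemma G_empty : G (@lang_empty A).
Proof. by case: HG => [[_ [G0 _]] _]. Qed.

Lemma G_full : G (@lang_full A).
Proof. by case: HG => [[_ [_ [G1 _]]] _]. Qed.

Lemma G_inter L1 L2 : G L1 -> G L2 -> G (lang_inter L1 L2).
Proof. by case: HG => [[_ [_ [_ [_ [GI _]]]]] _]; apply: GI. Qed.

Lemma G_compl L : G L -> G (lang_compl L).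
Proof. by case: HG => [[_ [_ [_ [_ [_ [GC _]]]]]] _]; apply: GC. Qed.

Lemma G_quot x y L : G L -> G (lquot x (rquot L y)).
Proof. by case: HG => [[_ [_ [_ [_ [_ [_ [GL GR]]]]]]] _] /(GR y) /(GL x). Qed.

Lemma G_profile_class Q u0 :
  (forall M, List.In M Q -> G M) -> G (fun u => profile_eq Q u u0).
Proof.
elim: Q => [|M Q IH] GQ.
  rewrite (_ : (fun u => _) = @lang_full A); first exact: G_full.
  by apply: lang_ext => u; split=> // _ ? [].
have {}IH := IH (fun M' inM' => GQ M' (or_intror inM')).
have GM : G M by apply: GQ; left.
case: (classic (M u0)) => Mu0.
  rewrite (_ : (fun u => _) = lang_inter M (fun u => profile_eq Q u u0)); first exact: G_inter.
  by apply: lang_ext => u; rewrite profile_eq_cons /lang_inter; tauto.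
rewrite (_ : (fun u => _) = lang_inter (lang_compl M) (fun u => profile_eq Q u u0)).
  by apply: G_inter => //; apply: G_compl.
by apply: lang_ext => u; rewrite profile_eq_cons /lang_inter /lang_compl; tauto.
Qed.

Lemma ctx_eq_profile L : G L ->
  exists2 Q, (forall M, List.In M Q -> G M) & forall u v, ctx_eq L u v <-> profile_eq Q u v.
Proof.
move=> GL; case: HG => _ /(_ L GL) [gT [h [S recL]]].
have {}recL : forall w, L w <-> word_prod h w \in S := recL.
have [xys xysP] :=
  image_representatives (fun xy : seq A * seq A => (word_prod h xy.1, word_prod h xy.2)).
exists (List.map (fun xy => lquot xy.1 (rquot L xy.2)) xys).
  by move=> M /List.in_map_iff [xy [<- _]]; apply: G_quot.
move=> u v; split=> [eq_uv M /List.in_map_iff [xy [<- _]] | eq_uv x y].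
  by rewrite /lquot /rquot -!catA; apply: eq_uv.
have [[x' y'] in_xy' [eqx eqy]] := xysP (x, y).
have := eq_uv _ (List.in_map (fun xy => lquot xy.1 (rquot L xy.2)) _ _ in_xy').
by rewrite /lquot /rquot -!catA !recL !word_prod_cat /= eqx eqy.
Qed.

Lemma ef_eq0_profile Pi : (forall L, List.In L Pi -> G L) ->
  exists2 Ms, (forall M, List.In M Ms -> SF G M) &
    forall u v, ef_eq Pi 0 u v <-> profile_eq Ms u v.
Proof.
elim: Pi => [|L Pi IH] GPi; first by exists [::] => // u v; split=> _ ? [].
have [Ms SF_Ms eqMs] := IH (fun L' inL' => GPi L' (or_intror inL')).
have [Q GQ eqQ] := ctx_eq_profile (GPi L (or_introl erefl)).
exists (List.app Q Ms).
  by move=> M /List.in_app_iff [/GQ /SF_base | /SF_Ms].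
move=> u v; rewrite profile_eq_app -eqQ -eqMs /=.
split=> [eq_uv | [eqL eqPi] L' [<- // | inL']]; last exact: eqPi.
by split=> [|L' inL']; apply: eq_uv; [left | right].
Qed.

Definition shift_cover L (sl : seq (lang A * lang A)) :=
  [/\ forall q, List.In q sl -> G q.1 /\ G q.2,
      forall u, exists2 q, List.In q sl & q.1 u &
      forall q, List.In q sl -> forall u v, q.1 u -> (L v <-> q.2 (u ++ v))].

Lemma word_prod_pow (gT : finGroupType) (h : A -> gT) u n :
  word_prod h (flatten (nseq n u)) = (word_prod h u ^+ n)%g.
Proof.
by elim: n => [|n IH]; [rewrite /word_prod big_nil expg0 | rewrite /= word_prod_cat IH expgS].
Qed.

Lemma shift_cover_exists L : G L -> exists sl, shift_cover L sl.
Proof.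
move=> GL; have [Q GQ eqQ] := ctx_eq_profile GL.
case: HG => _ /(_ L GL) [gT [h [S recL]]].
have {}recL : forall w, L w <-> word_prod h w \in S := recL.
(* inv_pow u0 ++ u0 evaluates to 1, so it can be prepended to any u in the context class of u0. *)
pose inv_pow u := flatten (nseq #[word_prod h u]%g.-1 u).
pose shift u0 := lquot (inv_pow u0) L.
have rquot_nil : rquot L [::] = L by apply: lang_ext => w; rewrite /rquot cats0.
have G_shift u0 : G (shift u0) by rewrite /shift -rquot_nil; apply: G_quot.
have [us usP] := image_representatives (word_prod h).
exists (List.map (fun u0 => (fun u => profile_eq Q u u0, shift u0)) us); split.
- by move=> q /List.in_map_iff [u0 [<- _]]; split; [apply: G_profile_class | apply: G_shift].
- move=> u; have [u0 in_u0 eq_prod] := usP u.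
  exists (fun u => profile_eq Q u u0, shift u0); first exact: List.in_map.
  by apply/eqQ => x y; rewrite !recL !word_prod_cat eq_prod.
- move=> q /List.in_map_iff [u0 [<- _]] u v /= /eqQ /(_ (inv_pow u0) v).
  rewrite /shift /lquot => ->; rewrite !recL !word_prod_cat word_prod_pow.
  by rewrite mulgA -expgSr prednK ?order_gt0 // expg_order mul1g.
Qed.

End GroupPrevariety.

Definition term_code (t : term) : nat + bool :=
  match t with TVar x => inl x | TMin => inr false | TMax => inr true end.

Definition term_decode (c : nat + bool) : term :=
  match c with inl x => TVar x | inr false => TMin | inr true => TMax end.

Lemma term_codeK : cancel term_code term_decode. Proof. by case. Qed.

HB.instance Definition _ := Equality.copy term (can_type term_codeK).

(* The factor w(i,j) = a_(i+1) ... a_(j-1) strictly between positions i and j. *)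
Definition subword (T : Type) (w : seq T) (i j : nat) := take (j.-1 - i) (drop i w).
Arguments subword : simpl never.

Section Subword.
Variables (T : Type) (w : seq T).

Lemma size_subword i j : j <= (size w).+1 -> size (subword w i j) = j.-1 - i.
Proof. by move=> le_j; rewrite size_take size_drop; case: ifP; lia. Qed.

Lemma nth_subword x0 i j k : k < j.-1 - i -> nth x0 (subword w i j) k = nth x0 w (i + k).
Proof. by move=> lt_k; rewrite nth_take // nth_drop. Qed.

Lemma subword0 j : subword w 0 j = take j.-1 w.
Proof. by rewrite /subword subn0 drop0. Qed.

Lemma subword_full : subword w 0 (size w).+1 = w.
Proof. by rewrite subword0 take_size. Qed.

Lemma subword_split x0 i k j : i < k < j -> j <= (size w).+1 ->
  subword w i j = subword w i k ++ nth x0 w k.-1 :: subword w k j.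
Proof.
move=> /andP [lt_ik lt_kj] le_j; rewrite /subword.
have -> : j.-1 - i = (k.-1 - i) + (j.-1 - k).+1 by lia.
rewrite takeD drop_drop (_ : k.-1 - i + i = k.-1); last by lia.
by rewrite [drop k.-1 w](drop_nth x0) /= ?prednK //; lia.
Qed.

Lemma subword_cat_letter i j s b s' : i < j <= (size w).+1 ->
  subword w i j = s ++ b :: s' ->
  let k := (i + size s).+1 in
  [/\ i < k < j, subword w i k = s, subword w k j = s' & forall x0, nth x0 w k.-1 = b].
Proof.
move=> /andP [lt_ij le_j] def_s k.
have size_s : size (subword w i j) = size s + (size s').+1 by rewrite def_s size_cat.
rewrite size_subword // in size_s.
have lt_ikj : i < k < j by apply/andP; split; lia.
move: def_s; rewrite (subword_split b lt_ikj le_j) => def_s.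
have size_k : size (subword w i k) = size s by rewrite size_subword; lia.
have := congr1 (drop (size s)) def_s; have := congr1 (take (size s)) def_s.
rewrite !drop_size_cat // !take_size_cat // => -> [eq_b ->].
by split=> // x0; rewrite (set_nth_default b) //; lia.
Qed.

Lemma take_subword l h e :
  0 < e -> e + l <= h -> take e.-1 (subword w l h) = subword w l (e + l).
Proof. by move=> e_gt0 le_h; rewrite /subword take_takel; [congr take | ]; lia. Qed.

Lemma take_cat_subword p e :
  p < e -> take e.-1 w = take p w ++ subword w p e.
Proof. by move=> lt_pe; rewrite /subword -takeD; congr take; lia. Qed.

Lemma subword_suffix p : subword w p (size w).+1 = drop p w.
Proof. by rewrite /subword take_oversize // size_drop; lia. Qed.

End Subword.

Lemma nat_neighbours (s : seq nat) i :
  has (ltn^~ i) s -> has (ltn i) s ->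
  exists lo hi, [/\ lo \in s, hi \in s, lo < i < hi &
    forall j, j \in s -> (j < i -> j <= lo) /\ (i < j -> hi <= j)].
Proof.
pose below j := (j \in s) && (j < i); pose above j := (j \in s) && (i < j).
move=> /hasP [j0 j0_in lt_j0] /hasP [j1 j1_in lt_j1].
have ex_below : exists j, below j by exists j0; apply/andP.
have ex_above : exists j, above j by exists j1; apply/andP.
have ub_below j : below j -> j <= i by case/andP=> _ /ltnW.
case: (ex_maxnP ex_below ub_below) => lo /andP [lo_in lt_lo] lo_max.
case: (ex_minnP ex_above) => hi /andP [hi_in lt_hi] hi_min.
exists lo, hi; split=> [||| j j_in]; rewrite ?lt_lo //.
by split=> lt_j; [apply: lo_max | apply: hi_min]; apply/andP.
Qed.

Definition tracked (xs : seq nat) : seq term := [:: TMin, TMax & map TVar xs].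

Lemma tracked_min xs : TMin \in tracked xs. Proof. by rewrite inE eqxx. Qed.

Lemma tracked_max xs : TMax \in tracked xs. Proof. by rewrite !inE eqxx orbT. Qed.

Lemma tracked_cons y xs t :
  t \in tracked (y :: xs) -> t = TVar y \/ (t \in tracked xs /\ t != TVar y).
Proof.
move=> in_t; case: (eqVneq t (TVar y)) => [-> | neq_ty]; [by left | right; split=> //].
by move: in_t; rewrite !inE (negbTE neq_ty).
Qed.

Lemma upd_eq (nu : nat -> nat) x i : upd nu x i x = i.
Proof. by rewrite /upd eqxx. Qed.

Lemma upd_neq (nu : nat -> nat) x y i : y != x -> upd nu x i y = nu y.
Proof. by rewrite /upd => /negbTE ->. Qed.

Lemma eval_upd_other (A : finType) (w : seq A) nu y i t :
  t != TVar y -> eval_term w (upd nu y i) t = eval_term w nu t.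
Proof. by case: t => //= x neq_xy; rewrite upd_neq //; apply: contraNneq neq_xy => ->. Qed.

Section EFInvariant.
Variables (A : finType) (Pi : seq (lang A)).
Implicit Types (w : seq A) (nu : nat -> nat).

(* The invariant of the game: the positions named by min, max and the variables xs are in the
   same order and carry the same letters in w and w', and the factors between them are
   ef_eq-equivalent. *)
Definition ef_inv m w nu w' nu' xs :=
  [/\ forall t, t \in tracked xs ->
        eval_term w nu t <= (size w).+1 /\ eval_term w' nu' t <= (size w').+1,
      forall t1 t2, t1 \in tracked xs -> t2 \in tracked xs ->
        (eval_term w nu t1 < eval_term w nu t2) = (eval_term w' nu' t1 < eval_term w' nu' t2),
      forall t a, t \in tracked xs -> 0 < eval_term w nu t <= size w ->
        nth a w (eval_term w nu t).-1 = nth a w' (eval_term w' nu' t).-1 &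
      forall t1 t2, t1 \in tracked xs -> t2 \in tracked xs ->
        eval_term w nu t1 < eval_term w nu t2 ->
        ef_eq Pi m (subword w (eval_term w nu t1) (eval_term w nu t2))
                   (subword w' (eval_term w' nu' t1) (eval_term w' nu' t2))].

Section Basics.
Variables (m : nat) (w : seq A) (nu : nat -> nat) (w' : seq A) (nu' : nat -> nat) (xs : seq nat).
Hypothesis inv : ef_inv m w nu w' nu' xs.
Local Notation ev := (eval_term w nu).
Local Notation ev' := (eval_term w' nu').

Lemma ef_inv_leq t1 t2 : t1 \in tracked xs -> t2 \in tracked xs ->
  (ev t1 <= ev t2) = (ev' t1 <= ev' t2).
Proof. by case: inv => _ lt_eq _ _ in1 in2; rewrite leqNgt [RHS]leqNgt lt_eq. Qed.

Lemma ef_inv_eq t1 t2 : t1 \in tracked xs -> t2 \in tracked xs ->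
  (ev t1 == ev t2) = (ev' t1 == ev' t2).
Proof. by move=> in1 in2; rewrite !eqn_leq !ef_inv_leq. Qed.

Lemma ef_inv_range t : t \in tracked xs -> (0 < ev t <= size w) = (0 < ev' t <= size w').
Proof.
case: inv => _ lt_eq _ _ in_t.
have /= := lt_eq _ _ (tracked_min xs) in_t; have /= := lt_eq _ _ in_t (tracked_max xs).
by rewrite !ltnS => -> ->.
Qed.

Lemma ef_inv_label a t : t \in tracked xs -> (sat w nu (FLabel a t) <-> sat w' nu' (FLabel a t)).
Proof.
move=> in_t; have [_ _ labels _] := inv; have range_eq := ef_inv_range in_t.
split=> -[range lab]; split.
- by rewrite -range_eq.
- by rewrite -labels.
- by rewrite range_eq.
- by rewrite labels // range_eq.
Qed.

Lemma ef_inv_pred L t : List.In L Pi -> t \in tracked xs ->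
  (sat w nu (FPred L t) <-> sat w' nu' (FPred L t)).
Proof.
move=> inL in_t; have [_ lt_eq _ factors] := inv.
have /= pos_eq := lt_eq _ _ (tracked_min xs) in_t; rewrite /= -pos_eq.
have eqL : 0 < ev t -> L (take (ev t).-1 w) <-> L (take (ev' t).-1 w').
  move=> pos_t; have := factors _ _ (tracked_min xs) in_t pos_t; rewrite /= !subword0.
  by move=> eqm; have /= := ef_eqW (leq0n m) eqm L inL [::] [::]; rewrite !cats0.
by split=> -[pos_t Lt]; split=> //; apply/(eqL pos_t).
Qed.

Lemma ef_inv_sym : ef_inv m w' nu' w nu xs.
Proof.
case: inv => bounds lt_eq labels factors; split.
- by move=> t /bounds [].
- by move=> t1 t2 in1 in2; rewrite lt_eq.
- by move=> t a in_t; rewrite -ef_inv_range // => /(labels t a in_t) ->.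
- by move=> t1 t2 in1 in2; rewrite -lt_eq // => /(factors _ _ in1 in2) /ef_eq_sym.
Qed.

End Basics.

Lemma ef_invW k m w nu w' nu' xs :
  m <= k -> ef_inv k w nu w' nu' xs -> ef_inv m w nu w' nu' xs.
Proof.
move=> le_mk [bounds lt_eq labels factors]; split=> // t1 t2 in1 in2 lt12.
by apply: (ef_eqW le_mk); apply: factors.
Qed.

Lemma ef_eq_subword_join m (a0 : A) w w' p q r p' q' r' :
  p < q < r -> r <= (size w).+1 -> p' < q' < r' -> r' <= (size w').+1 ->
  nth a0 w q.-1 = nth a0 w' q'.-1 ->
  ef_eq Pi m (subword w p q) (subword w' p' q') ->
  ef_eq Pi m (subword w q r) (subword w' q' r') ->
  ef_eq Pi m (subword w p r) (subword w' p' r').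
Proof.
move=> pqr le_r pqr' le_r' eq_a.
by rewrite (subword_split a0 pqr le_r) (subword_split a0 pqr' le_r') eq_a; apply: ef_eq_cat_letter.
Qed.

Section Update.
Variables (m : nat) (w : seq A) (nu : nat -> nat) (w' : seq A) (nu' : nat -> nat).
Variables (xs : seq nat) (y i i' : nat).
Local Notation ev := (eval_term w nu).
Local Notation ev' := (eval_term w' nu').

Lemma ef_inv_upd :
  ef_inv m w nu w' nu' xs -> i <= (size w).+1 -> i' <= (size w').+1 ->
  (forall s, s \in tracked xs -> (ev s < i) = (ev' s < i') /\ (i < ev s) = (i' < ev' s)) ->
  (forall a, 0 < i <= size w -> nth a w i.-1 = nth a w' i'.-1) ->
  (forall s, s \in tracked xs ->
    (ev s < i -> ef_eq Pi m (subword w (ev s) i) (subword w' (ev' s) i')) /\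
    (i < ev s -> ef_eq Pi m (subword w i (ev s)) (subword w' i' (ev' s)))) ->
  ef_inv m w (upd nu y i) w' (upd nu' y i') (y :: xs).
Proof.
move=> [bounds lt_eq labels factors] le_i le_i' order label_i factors_i.
have ev_y (v : seq A) mu j : eval_term v (upd mu y j) (TVar y) = j by apply: upd_eq.
split.
- by move=> t /tracked_cons [-> | [in_t neq]]; rewrite ?ev_y ?eval_upd_other //; apply: bounds.
- move=> t1 t2 /tracked_cons [-> | [in1 neq1]] /tracked_cons [-> | [in2 neq2]];
    rewrite ?ev_y ?eval_upd_other //; first by rewrite !ltnn.
  + by case: (order t2 in2).
  + by case: (order t1 in1).
  + exact: lt_eq.
- move=> t a /tracked_cons [-> | [in_t neq]]; rewrite ?ev_y ?eval_upd_other //.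
  + exact: label_i.
  + exact: labels.
- move=> t1 t2 /tracked_cons [-> | [in1 neq1]] /tracked_cons [-> | [in2 neq2]];
    rewrite ?ev_y ?eval_upd_other //; first by rewrite ltnn.
  + by case: (factors_i t2 in2).
  + by case: (factors_i t1 in1).
  + by move=> /(factors _ _ in1 in2).
Qed.

End Update.

Section Extension.
Variables (m : nat) (w : seq A) (nu : nat -> nat) (w' : seq A) (nu' : nat -> nat).
Variables (xs : seq nat) (y : nat).
Hypothesis inv : ef_inv m.+1 w nu w' nu' xs.
Local Notation ev := (eval_term w nu).
Local Notation ev' := (eval_term w' nu').

Lemma ef_inv_ext_tracked t0 : t0 \in tracked xs ->
  ef_inv m w (upd nu y (ev t0)) w' (upd nu' y (ev' t0)) (y :: xs).
Proof.
move=> in_t0; have [bounds lt_eq labels factors] := inv.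
have [le_i le_i'] := bounds t0 in_t0.
apply: ef_inv_upd => //; first exact: ef_invW inv.
- by move=> s in_s; rewrite !lt_eq.
- by move=> a; apply: labels.
- by move=> s in_s; split=> lt_s; apply: (ef_eqW (leqnSn m)); apply: factors.
Qed.

Lemma tracked_neighbours i : i <= (size w).+1 -> (forall t, t \in tracked xs -> ev t != i) ->
  exists tl th, [/\ tl \in tracked xs, th \in tracked xs, ev tl < i < ev th &
    forall s, s \in tracked xs ->
      (ev s <= ev tl /\ ev' s <= ev' tl) \/ (ev th <= ev s /\ ev' th <= ev' s)].
Proof.
move=> le_i untracked.
have has_below : has (ltn^~ i) (map ev (tracked xs)).
  apply/hasP; exists 0; first by apply/mapP; exists TMin => //; apply: tracked_min.
  by have /eqP /= := untracked _ (tracked_min xs); rewrite /ltn /=; lia.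
have has_above : has (ltn i) (map ev (tracked xs)).
  apply/hasP; exists (size w).+1; first by apply/mapP; exists TMax => //; apply: tracked_max.
  by have /eqP /= := untracked _ (tracked_max xs); rewrite /ltn /=; lia.
have [_ [_ [/mapP [tl in_tl ->] /mapP [th in_th ->] lt_i near]]] :=
  nat_neighbours has_below has_above.
exists tl, th; split=> // s in_s; have [near_lo near_hi] := near _ (map_f _ in_s).
case: (ltngtP (ev s) i) => [/near_lo | /near_hi | eq_s]; last by move/eqP: (untracked s in_s).
  by left; split; rewrite // -(ef_inv_leq inv).
by right; split; rewrite // -(ef_inv_leq inv).
Qed.

Lemma ef_inv_factor_left (a0 : A) tl s i i' :
  tl \in tracked xs -> s \in tracked xs -> ev s <= ev tl -> ev tl < i <= (size w).+1 ->
  ev' tl < i' <= (size w').+1 ->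
  ef_eq Pi m (subword w (ev tl) i) (subword w' (ev' tl) i') ->
  ef_eq Pi m (subword w (ev s) i) (subword w' (ev' s) i').
Proof.
have [_ lt_eq labels factors] := inv.
move=> in_tl in_s le_s /andP [lt_i le_i] /andP [lt_i' le_i'] eq_tl.
case: (ltngtP (ev s) (ev tl)) => [lt_stl | | eq_stl]; [ | lia | ].
  have lt_stl' : ev' s < ev' tl by rewrite -lt_eq.
  apply: (@ef_eq_subword_join _ a0 _ _ _ (ev tl) _ _ (ev' tl)) => //; try lia.
  - by apply: labels => //; lia.
  - by apply: (ef_eqW (leqnSn m)); apply: factors.
have eq_stl' : ev' s = ev' tl by apply/eqP; rewrite -(ef_inv_eq inv) // eq_stl.
by rewrite eq_stl eq_stl'.
Qed.

Lemma ef_inv_factor_right (a0 : A) th s i i' :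
  th \in tracked xs -> s \in tracked xs -> ev th <= ev s -> i < ev th -> i' < ev' th ->
  ef_eq Pi m (subword w i (ev th)) (subword w' i' (ev' th)) ->
  ef_eq Pi m (subword w i (ev s)) (subword w' i' (ev' s)).
Proof.
have [bounds lt_eq labels factors] := inv.
move=> in_th in_s le_s lt_i lt_i' eq_th; have [le_sw le_sw'] := bounds s in_s.
case: (ltngtP (ev th) (ev s)) => [lt_ths | | eq_ths]; [ | lia | ].
  have lt_ths' : ev' th < ev' s by rewrite -lt_eq.
  apply: (@ef_eq_subword_join _ a0 _ _ _ (ev th) _ _ (ev' th)) => //; try lia.
  - by apply: labels => //; lia.
  - by apply: (ef_eqW (leqnSn m)); apply: factors.
have eq_ths' : ev' th = ev' s by apply/eqP; rewrite -(ef_inv_eq inv) // eq_ths.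
by rewrite -eq_ths -eq_ths'.
Qed.

Lemma ef_inv_ext_gap i : i <= (size w).+1 -> (forall t, t \in tracked xs -> ev t != i) ->
  exists2 i', i' <= (size w').+1 & ef_inv m w (upd nu y i) w' (upd nu' y i') (y :: xs).
Proof.
move=> le_i untracked; have [bounds lt_eq labels factors] := inv.
have [tl [th [in_tl in_th /andP [lt_lo lt_hi] dich]]] := tracked_neighbours le_i untracked.
have [le_hi le_hi'] := bounds th in_th.
have lt_lohi' : ev' tl < ev' th by rewrite -lt_eq //; apply: ltn_trans lt_hi.
have [a0 _] : exists a0 : A, True by case: (w) le_hi lt_lo lt_hi => [|a ?] /=; [lia | exists a].
have [_ split_w _] := factors tl th in_tl in_th (ltn_trans lt_lo lt_hi).
have /split_w [t [t' [def_t eq_t eq_t']]] :=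
  subword_split a0 (introT andP (conj lt_lo lt_hi)) le_hi.
have [] := subword_cat_letter (introT andP (conj lt_lohi' le_hi')) def_t.
set i' := (ev' tl + size t).+1 => /andP [lt_lo' lt_hi'] sub_l sub_r lab_i'.
exists i'; first by lia.
apply: ef_inv_upd (ef_invW (leqnSn m) inv) le_i _ _ _ _; first lia.
- by move=> s /dich d; split; apply/idP/idP; lia.
- by move=> a _; rewrite lab_i' (set_nth_default a0) //; lia.
move=> s in_s; split=> lt_s.
  apply: (ef_inv_factor_left a0 in_tl in_s); rewrite ?sub_l //; try lia.
  by case: (dich s in_s); lia.
apply: (ef_inv_factor_right a0 in_th in_s); rewrite ?sub_r //.
by case: (dich s in_s); lia.
Qed.

Lemma ef_inv_ext i : i <= (size w).+1 ->
  exists2 i', i' <= (size w').+1 & ef_inv m w (upd nu y i) w' (upd nu' y i') (y :: xs).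
Proof.
move=> le_i; case: (boolP (has (fun t => ev t == i) (tracked xs))) => [|none].
  case/hasP=> t0 in_t0 /eqP <-.
  have [bounds _ _ _] := inv.
  by exists (ev' t0); [exact: (bounds t0 in_t0).2 | apply: ef_inv_ext_tracked].
apply: ef_inv_ext_gap => // t in_t; apply: contraNneq none => eq_ti.
by apply/hasP; exists t; rewrite ?eq_ti.
Qed.

End Extension.

Lemma term_tracked xs t : (forall x, term_free x t -> x \in xs) -> t \in tracked xs.
Proof.
case: t => [x||] fv_t; rewrite ?tracked_min ?tracked_max //.
by rewrite !inE (map_f TVar (fv_t x (eqxx x))) !orbT.
Qed.

Fixpoint qdepth (f : formula A) : nat :=
  match f with
  | FNot g => qdepth g
  | FAnd g h | FOr g h | FImp g h => maxn (qdepth g) (qdepth h)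
  | FExists _ g | FForall _ g => (qdepth g).+1
  | _ => 0
  end.

Lemma ef_inv_top m w w' :
  ef_eq Pi m w w' -> ef_inv m w (fun _ => 0) w' (fun _ => 0) [::].
Proof.
have tracked_nil t : t \in tracked [::] -> t = TMin \/ t = TMax.
  by rewrite !inE => /orP [] /eqP ->; [left | right].
move=> eq_ww'; split.
- by move=> t /tracked_nil [] ->.
- by move=> t1 t2 /tracked_nil [] -> /tracked_nil [] -> /=; rewrite ?ltnn ?ltn0Sn.
- by move=> t a /tracked_nil [] -> /=; rewrite ?ltnn ?andbF.
- move=> t1 t2 /tracked_nil [] -> /tracked_nil [] -> //=; rewrite ?ltnn // => _.
  by rewrite !subword_full.
Qed.

Lemma ef_inv_sat f m xs w nu w' nu' :
  preds_in (fun L => List.In L Pi) f -> (forall x, free_in x f -> x \in xs) ->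
  qdepth f <= m -> ef_inv m w nu w' nu' xs -> (sat w nu f <-> sat w' nu' f).
Proof.
elim: f m xs w nu w' nu' =>
  [||a t|t1 t2|t1 t2|L t|g IH|g IHg h IHh|g IHg h IHh|g IHg h IHh|x g IH|x g IH]
  m xs w nu w' nu' /=; try by [].
- by move=> _ /term_tracked in_t _ /ef_inv_label; apply.
- move=> _ fv _ [_ lt_eq _ _].
  by rewrite lt_eq // term_tracked // => y fy; apply: fv; rewrite fy ?orbT.
- move=> _ fv _ inv.
  have [in1 in2] : t1 \in tracked xs /\ t2 \in tracked xs.
    by split; apply: term_tracked => y fy; apply: fv; rewrite fy ?orbT.
  have eq_eq := ef_inv_eq inv in1 in2.
  by split=> /eqP; [rewrite eq_eq | rewrite -eq_eq] => /eqP.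
- by move=> inL /term_tracked in_t _ /ef_inv_pred; apply.
- by move=> Pg fv qg inv; rewrite (IH m xs w nu w' nu').
1-3: move=> [Pg Ph] fv; rewrite geq_max => /andP [qg qh] inv;
  have fvg y : free_in y g -> y \in xs by move=> fy; apply: fv; rewrite fy.
1-3: have fvh y : free_in y h -> y \in xs by move=> fy; apply: fv; rewrite fy orbT.
1-3: by rewrite (IHg m xs w nu w' nu') ?(IHh m xs w nu w' nu').
all: case: m => [//|m] Pg fv; rewrite ltnS => qg inv.
all: have fvg y : free_in y g -> y \in x :: xs
       by move=> fy; rewrite inE; case: eqP => //= /eqP neq; apply: fv; rewrite eq_sym neq.
all: have IHg i i' : ef_inv m w (upd nu x i) w' (upd nu' x i') (x :: xs) ->
         sat w (upd nu x i) g <-> sat w' (upd nu' x i') g by move=> inv'; apply: (IH m (x :: xs)).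
all: have IHg' i i' : ef_inv m w' (upd nu' x i') w (upd nu x i) (x :: xs) ->
         sat w (upd nu x i) g <-> sat w' (upd nu' x i') g
       by move=> inv'; apply: iff_sym; apply: (IH m (x :: xs)).
- split=> [[i [le_i sat_i]] | [i' [le_i' sat_i']]].
    have [i' le_i' /IHg eq_sat] := ef_inv_ext x inv le_i.
    by exists i'; split=> //; apply/eq_sat.
  have [i le_i /IHg' eq_sat] := ef_inv_ext x (ef_inv_sym inv) le_i'.
  by exists i; split=> //; apply/eq_sat.
- split=> [sat_all i' le_i' | sat_all i le_i].
    by have [i le_i /IHg' <-] := ef_inv_ext x (ef_inv_sym inv) le_i'; apply: sat_all.
  by have [i' le_i' /IHg ->] := ef_inv_ext x inv le_i; apply: sat_all.
Qed.

End EFInvariant.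

Fixpoint preds (A : finType) (f : formula A) : seq (lang A) :=
  match f with
  | FPred L _ => [:: L]
  | FNot g | FExists _ g | FForall _ g => preds g
  | FAnd g h | FOr g h | FImp g h => List.app (preds g) (preds h)
  | _ => [::]
  end.

Lemma preds_in_sub (A : finType) (P Q : lang A -> Prop) (f : formula A) :
  (forall L, P L -> Q L) -> preds_in P f -> preds_in Q f.
Proof.
by move=> PQ; elim: f => //= [L _ /PQ | g IHg h IHh [] | g IHg h IHh [] | g IHg h IHh []]; tauto.
Qed.

Lemma preds_in_preds (A : finType) (f : formula A) : preds_in (fun L => List.In L (preds f)) f.
Proof.
elim: f => //= [L _ | g IHg h IHh | g IHg h IHh | g IHg h IHh]; first by left.
all: by split; [apply: preds_in_sub IHg | apply: preds_in_sub IHh] => L inL;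
  apply/List.in_app_iff; [left | right].
Qed.

Lemma preds_in_inv (A : finType) (P : lang A -> Prop) (f : formula A) :
  preds_in P f -> forall L, List.In L (preds f) -> P L.
Proof.
elim: f => //= [L _ PL L' [<- //|[]] | g IHg h IHh | g IHg h IHh | g IHg h IHh].
all: by move=> [Pg Ph] L /List.in_app_iff [/IHg | /IHh]; apply.
Qed.

Lemma FO_in_SF (A : finType) (G : lang A -> Prop) (L : lang A) :
  group_prevariety G -> FO_def G L -> SF G L.
Proof.
move=> HG [f [closed_f [Gf defL]]].
have [Ms0 SF_Ms0 base] := ef_eq0_profile HG (preds_in_inv Gf).
have [Ms SF_Ms eqMs] := ef_eq_profile (G_empty HG) SF_Ms0 base (qdepth f).
apply: (SF_saturated (G_empty HG) SF_Ms) => u v /eqMs /ef_inv_top inv.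
rewrite !defL (ef_inv_sat (preds_in_preds f) _ (leqnn _) inv) // => x.
by rewrite (negbTE (closed_f x)).
Qed.

Section Restriction.
Variable A : finType.
Implicit Types (f g : formula A) (w : seq A) (nu : nat -> nat).

Definition var_of (t : term) : nat := if t is TVar x then x else 0.

Fixpoint max_var f : nat :=
  match f with
  | FLabel _ t | FPred _ t => var_of t
  | FLt t1 t2 | FEq t1 t2 => maxn (var_of t1) (var_of t2)
  | FNot g => max_var g
  | FAnd g h | FOr g h | FImp g h => maxn (max_var g) (max_var h)
  | FExists x g | FForall x g => maxn x (max_var g)
  | _ => 0
  end.

Definition fresh_from (N : nat) (t : term) : bool := if t is TVar x then N <= x else true.

Definition restrict_term (lo hi t : term) : term :=
  match t with TMin => lo | TMax => hi | TVar _ => t end.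

Definition FLe (t1 t2 : term) : formula A := FNot (FLt A t2 t1).

(* Relativises f to the factor strictly between the positions lo and hi, which play the roles
   of min and max; tp expresses the prefix predicates of that factor. *)
Fixpoint restrict (lo hi : term) (tp : lang A -> term -> formula A) f : formula A :=
  let rt := restrict_term lo hi in
  let between z := FAnd (FLe lo (TVar z)) (FLe (TVar z) hi) in
  match f with
  | FTrue => FTrue A
  | FFalse => FFalse A
  | FLabel a t => FAnd (FAnd (FLt A lo (rt t)) (FLt A (rt t) hi)) (FLabel a (rt t))
  | FLt t1 t2 => FLt A (rt t1) (rt t2)
  | FEq t1 t2 => FEq A (rt t1) (rt t2)
  | FPred L t => FAnd (FLt A lo (rt t)) (tp L (rt t))
  | FNot g => FNot (restrict lo hi tp g)
  | FAnd g h => FAnd (restrict lo hi tp g) (restrict lo hi tp h)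
  | FOr g h => FOr (restrict lo hi tp g) (restrict lo hi tp h)
  | FImp g h => FImp (restrict lo hi tp g) (restrict lo hi tp h)
  | FExists z g => FExists z (FAnd (between z) (restrict lo hi tp g))
  | FForall z g => FForall z (FImp (between z) (restrict lo hi tp g))
  end.

Lemma free_restrict lo hi tp f y :
  ~~ term_free y lo -> ~~ term_free y hi ->
  (forall L t, free_in y (tp L t) -> term_free y t) ->
  free_in y (restrict lo hi tp f) -> free_in y f.
Proof.
move=> /negbTE ylo /negbTE yhi ytp.
have yrt t : term_free y (restrict_term lo hi t) = term_free y t by case: t.
elim: f => //= [a t | t1 t2 | t1 t2 | L t | g IHg h IHh | g IHg h IHh | g IHg h IHh
  | z g IH | z g IH]; rewrite ?yrt ?ylo ?yhi /=.
- by case: (term_free y t).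
- by [].
- by [].
- by case/orP=> // /ytp; rewrite yrt.
- by case/orP=> [/IHg -> | /IHh ->]; rewrite ?orbT.
- by case/orP=> [/IHg -> | /IHh ->]; rewrite ?orbT.
- by case/orP=> [/IHg -> | /IHh ->]; rewrite ?orbT.
- by case/andP=> /negbTE zy; rewrite zy /= => /IH.
- by case/andP=> /negbTE zy; rewrite zy /= => /IH.
Qed.

Section RestrictSat.
Variables (w : seq A) (nu0 : nat -> nat) (lo hi : term) (tp : lang A -> term -> formula A).
Variables (P : lang A -> Prop) (N : nat).
Local Notation l := (eval_term w nu0 lo).
Local Notation h := (eval_term w nu0 hi).
Local Notation sub := (subword w l h).
Hypotheses (fresh_lo : fresh_from N lo) (fresh_hi : fresh_from N hi).
Hypotheses (lt_lh : l < h) (le_h : h <= (size w).+1).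
Hypothesis tpP : forall nu L t, (forall y, N <= y -> nu y = nu0 y) -> P L ->
  l < eval_term w nu t -> (sat w nu (tp L t) <-> L (subword w l (eval_term w nu t))).

Lemma eval_fresh nu t : fresh_from N t -> (forall y, N <= y -> nu y = nu0 y) ->
  eval_term w nu t = eval_term w nu0 t.
Proof. by case: t => //= x le_Nx; apply. Qed.

Lemma size_sub : (size sub).+1 = h - l.
Proof. by rewrite size_subword //; lia. Qed.

Lemma eval_restrict_term nu nu' t : var_of t < N -> (forall y, N <= y -> nu y = nu0 y) ->
  (forall y, term_free y t -> nu y = nu' y + l /\ nu' y <= h - l) ->
  eval_term w nu (restrict_term lo hi t) = eval_term sub nu' t + l /\ eval_term sub nu' t <= h - l.
Proof.
move=> t_lt agree fv; case: t t_lt fv => [x | |] /= x_lt fv.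
- by apply: fv; rewrite eqxx.
- by rewrite eval_fresh //; split=> //; lia.
- by rewrite eval_fresh // size_sub; split=> //; lia.
Qed.

Section Atoms.
Variables (nu nu' : nat -> nat).
Hypothesis agree : forall y, N <= y -> nu y = nu0 y.

Lemma sat_restrict_label a t : var_of t < N ->
  (forall y, term_free y t -> nu y = nu' y + l /\ nu' y <= h - l) ->
  (sat w nu (restrict lo hi tp (FLabel a t)) <-> sat sub nu' (FLabel a t)).
Proof.
move=> t_lt fv; have [/= -> le_e] := eval_restrict_term t_lt agree fv.
rewrite (eval_fresh fresh_lo agree) (eval_fresh fresh_hi agree) size_subword //.
have nth_eq : 0 < eval_term sub nu' t -> eval_term sub nu' t + l < h ->
    nth a sub (eval_term sub nu' t).-1 = nth a w (eval_term sub nu' t + l).-1.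
  by move=> e_pos e_lt; rewrite nth_subword; [congr nth | ]; lia.
split=> [[[lt1 lt2] [_ lab]] | [/andP [e_pos e_le] lab]].
  by split; [lia | rewrite nth_eq //; lia].
by split; [lia | split; [lia | rewrite -nth_eq //; lia]].
Qed.

Lemma sat_restrict_pred L t : var_of t < N -> P L ->
  (forall y, term_free y t -> nu y = nu' y + l /\ nu' y <= h - l) ->
  (sat w nu (restrict lo hi tp (FPred L t)) <-> sat sub nu' (FPred L t)).
Proof.
move=> t_lt PL fv; rewrite /= (eval_fresh fresh_lo agree).
have [e_eq le_e] := eval_restrict_term t_lt agree fv.
split=> -[lt_e satL]; split; rewrite -?e_eq; try lia.
  by rewrite (@take_subword _ w l h) -?e_eq -?(tpP agree PL lt_e) //; lia.
have lt' : l < eval_term w nu (restrict_term lo hi t) by rewrite e_eq; lia.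
by rewrite (tpP agree PL lt') e_eq -(@take_subword _ w l h) //; lia.
Qed.

Section Quantifiers.
Variables (z : nat) (g : formula A).
Hypothesis lt_z : z < N.
Hypothesis IHz : forall j, j <= h - l ->
  (sat w (upd nu z (j + l)) (restrict lo hi tp g) <-> sat sub (upd nu' z j) g).

Let agree_z i y : N <= y -> upd nu z i y = nu0 y.
Proof. by move=> le_y; rewrite upd_neq; [apply: agree | apply/eqP; lia]. Qed.

Let bounds_z i :
  [/\ upd nu z i z = i, eval_term w (upd nu z i) lo = l & eval_term w (upd nu z i) hi = h].
Proof. by rewrite upd_eq !(eval_fresh _ (agree_z i)). Qed.

Lemma sat_restrict_exists :
  sat w nu (restrict lo hi tp (FExists z g)) <-> sat sub nu' (FExists z g).
Proof.
rewrite /=; split=> [[i [le_i [[lo_i hi_i] sat_i]]] | [j [le_j sat_j]]].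
  have [upd_z ev_lo ev_hi] := bounds_z i; rewrite upd_z ev_lo ev_hi in lo_i hi_i.
  exists (i - l); split; first by rewrite size_sub; lia.
  by rewrite -IHz ?subnK //; lia.
rewrite size_sub in le_j; have [upd_z ev_lo ev_hi] := bounds_z (j + l).
by exists (j + l); rewrite upd_z ev_lo ev_hi IHz //; do ?split=> //; lia.
Qed.

Lemma sat_restrict_forall :
  sat w nu (restrict lo hi tp (FForall z g)) <-> sat sub nu' (FForall z g).
Proof.
rewrite /=; split=> [sat_all j le_j | sat_all i le_i].
  rewrite size_sub in le_j; rewrite -IHz //; have [upd_z ev_lo ev_hi] := bounds_z (j + l).
  by apply: sat_all; rewrite ?upd_z ?ev_lo ?ev_hi; lia.
have [upd_z ev_lo ev_hi] := bounds_z i; rewrite upd_z ev_lo ev_hi => -[lo_i hi_i].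
have le_li : l <= i by lia.
rewrite -(subnK le_li) IHz; last lia.
by apply: sat_all; rewrite size_sub; lia.
Qed.

End Quantifiers.
End Atoms.

Lemma sat_restrict f : max_var f < N -> preds_in P f ->
  forall nu nu', (forall y, N <= y -> nu y = nu0 y) ->
  (forall y, free_in y f -> nu y = nu' y + l /\ nu' y <= h - l) ->
  (sat w nu (restrict lo hi tp f) <-> sat sub nu' f).
Proof.
elim: f => [||a t|t1 t2|t1 t2|L t|g IH|g IHg g' IHg'|g IHg g' IHg'|g IHg g' IHg'|z g IH|z g IH] //.
- by move=> t_lt _ nu nu' agree; apply: sat_restrict_label.
- rewrite /= gtn_max => /andP [lt1 lt2] _ nu nu' agree fv.
  have [-> _] := eval_restrict_term lt1 agree (fun y fy => fv y (introT orP (or_introl fy))).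
  have [-> _] := eval_restrict_term lt2 agree (fun y fy => fv y (introT orP (or_intror fy))).
  by rewrite ltn_add2r.
- rewrite /= gtn_max => /andP [lt1 lt2] _ nu nu' agree fv.
  have [-> _] := eval_restrict_term lt1 agree (fun y fy => fv y (introT orP (or_introl fy))).
  have [-> _] := eval_restrict_term lt2 agree (fun y fy => fv y (introT orP (or_intror fy))).
  by split=> [/addIn | ->].
- by move=> t_lt PL nu nu' agree; apply: sat_restrict_pred.
- by move=> t_lt Pg nu nu' agree fv /=; rewrite (IH t_lt Pg nu nu').
1-3: rewrite /= gtn_max => /andP [lt_g lt_g'] [Pg Pg'] nu nu' agree fv;
  by rewrite (IHg lt_g Pg nu nu') ?(IHg' lt_g' Pg' nu nu') // => y fy; apply: fv; rewrite fy ?orbT.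
all: rewrite /= gtn_max => /andP [lt_z lt_g] Pg nu nu' agree fv.
all: have IHz j : j <= h - l ->
         sat w (upd nu z (j + l)) (restrict lo hi tp g) <-> sat sub (upd nu' z j) g.
all: try (move=> le_j; apply: IH => // [y le_y | y fy]; rewrite /upd;
          [case: eqP => [eq_yz | _]; [lia | exact: agree] |
           case: (eqVneq y z) => [_ | neq_yz]; [split; lia |
                                                by apply: fv; rewrite eq_sym neq_yz]]).
- exact: sat_restrict_exists.
- exact: sat_restrict_forall.
Qed.

End RestrictSat.

Lemma preds_in_restrict (P Q : lang A -> Prop) lo hi tp f :
  (forall L t, P L -> preds_in Q (tp L t)) -> preds_in P f -> preds_in Q (restrict lo hi tp f).
Proof. by move=> tpQ; elim: f => //= *; intuition. Qed.

End Restriction.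

Lemma lang_concatP (A : finType) (L1 L2 : lang A) w :
  lang_concat L1 L2 w <-> exists2 p, p <= size w & L1 (take p w) /\ L2 (drop p w).
Proof.
split=> [[u [v [-> [L1u L2v]]]] | [p le_p [L1w L2w]]].
  by exists (size u); rewrite ?size_cat ?leq_addr // take_size_cat // drop_size_cat.
by exists (take p w), (drop p w); rewrite cat_take_drop.
Qed.

Section FOClosure.
Variables (A : finType) (G : lang A -> Prop).
Hypothesis HG : group_prevariety G.
Implicit Types (L : lang A) (f : formula A) (w : seq A).

Lemma FO_base L : G L -> FO_def G L.
Proof.
move=> GL; exists (FPred L TMax); split=> //; split=> // w /=.
by rewrite take_size; split=> // [[]].
Qed.

Lemma FO_union L1 L2 : FO_def G L1 -> FO_def G L2 -> FO_def G (lang_union L1 L2).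
Proof.
move=> [f1 [cl1 [G1 def1]]] [f2 [cl2 [G2 def2]]]; exists (FOr f1 f2); split.
  by move=> x /=; rewrite negb_or cl1 cl2.
by split=> // w; rewrite /lang_union def1 def2.
Qed.

Lemma FO_compl L : FO_def G L -> FO_def G (lang_compl L).
Proof.
by move=> [f [cl [Gf defL]]]; exists (FNot f); split=> //; split=> // w; rewrite /lang_compl defL.
Qed.

Lemma FO_letter a : FO_def G (lang_letter a).
Proof.
exists (FExists 0 (FAnd (FLabel a (TVar 0)) (FForall 1 (FOr (FEq A (TVar 1) TMin)
     (FOr (FEq A (TVar 1) TMax) (FEq A (TVar 1) (TVar 0))))))).
split; first by case=> [|[]].
split=> // w; rewrite /lang_letter /= /upd /=.
split=> [-> | [i [_ [[/andP [i_gt0 i_le] lab] only_i]]]].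
  by exists 1; split=> //; split=> // j /=; lia.
have size_w : size w = 1 by have := only_i 1; have := only_i 2; lia.
have i1 : i = 1 by lia.
by rewrite i1 in lab; case: w size_w lab {i_le only_i} => [|c []] //= _ ->.
Qed.

Definition shift_pred (sl : lang A -> seq (lang A * lang A)) (x : nat) L (t : term) :=
  foldr (fun q f => FAnd (FImp (FPred q.1 (TVar x)) (FPred q.2 t)) f) (FTrue A) (sl L).

Lemma sat_shift_pred sl x L t w nu p :
  shift_cover G L (sl L) -> nu x = p.+1 -> p < eval_term w nu t ->
  (sat w nu (shift_pred sl x L t) <-> L (subword w p (eval_term w nu t))).
Proof.
move=> [_ cover shift] nu_x lt_pe; rewrite /shift_pred.
set e := eval_term w nu t in lt_pe *.
have sat_all qs : sat w nu (foldr (fun q f => FAnd (FImp (FPred q.1 (TVar x)) (FPred q.2 t)) f)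
    (FTrue A) qs) <-> forall q, List.In q qs -> q.1 (take p w) -> q.2 (take p w ++ subword w p e).
  elim: qs => [|q qs IH] /=; first by split=> // _ ? [].
  rewrite IH nu_x -take_cat_subword //=; split=> [[imp all] q' [<- q1 | ] | all].
  - by case: imp.
  - exact: all.
  - split=> [[_ q1] | ]; first by split; [lia | apply: all; [left|]].
    by move=> q' in_q'; apply: all; right.
rewrite sat_all; split=> [all | Lsub q in_q q1].
  by have [q in_q q1] := cover (take p w); rewrite (shift q in_q _ _ q1); apply: all.
by rewrite -(shift q in_q _ _ q1).
Qed.

Lemma preds_in_True f : preds_in (fun _ => True) f.
Proof. by elim: f => //= *; intuition. Qed.

Lemma sat_restrict_prefix f w nu x p :
  max_var f < x -> sentence f -> nu x = p.+1 -> p <= size w ->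
  (sat w nu (restrict TMin (TVar x) (@FPred A) f) <-> sat (take p w) (fun _ => 0) f).
Proof.
move=> lt_x cl nu_x le_p.
have tpP nu' L t : (forall y, x <= y -> nu' y = nu y) -> True ->
    0 < eval_term w nu' t -> (sat w nu' (FPred L t) <-> L (subword w 0 (eval_term w nu' t))).
  by move=> _ _ pos; rewrite subword0 /=; split=> [[]|].
have lt_lh : eval_term w nu TMin < eval_term w nu (TVar x) by rewrite /= nu_x.
have le_h : eval_term w nu (TVar x) <= (size w).+1 by rewrite /= nu_x.
have fv y : free_in y f -> nu y = 0 + 0 /\ 0 <= nu x - 0 by rewrite (negbTE (cl y)).
have := @sat_restrict A w nu TMin (TVar x) (@FPred A) (fun _ => True) x isT (leqnn x)
  lt_lh le_h tpP f lt_x (preds_in_True f) nu (fun _ => 0) (fun _ _ => erefl) fv.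
by rewrite /= nu_x subword0.
Qed.

Section Concat.
Variable sl : lang A -> seq (lang A * lang A).
Hypothesis slP : forall L, G L -> shift_cover G L (sl L).

Lemma sat_restrict_suffix f w nu x0 p :
  max_var f < x0 -> sentence f -> preds_in G f -> nu x0 = p -> nu x0.+1 = p.+1 -> p <= size w ->
  (sat w nu (restrict (TVar x0) TMax (shift_pred sl x0.+1) f) <-> sat (drop p w) (fun _ => 0) f).
Proof.
move=> lt_x0 cl Gf nu_x0 nu_x le_p.
have tpP nu' L t : (forall y, x0 <= y -> nu' y = nu y) -> G L ->
    eval_term w nu (TVar x0) < eval_term w nu' t ->
    (sat w nu' (shift_pred sl x0.+1 L t) <->
     L (subword w (eval_term w nu (TVar x0)) (eval_term w nu' t))).
  move=> agree GL; rewrite /= nu_x0 => lt_p; apply: sat_shift_pred => //; first exact: slP.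
  by rewrite agree.
have lt_lh : eval_term w nu (TVar x0) < eval_term w nu TMax by rewrite /= nu_x0.
have fv y : free_in y f -> nu y = 0 + nu x0 /\ 0 <= (size w).+1 - nu x0 by rewrite (negbTE (cl y)).
have := @sat_restrict A w nu (TVar x0) TMax (shift_pred sl x0.+1) G x0 (leqnn x0) isT
  lt_lh (leqnn _) tpP f lt_x0 Gf nu (fun _ => 0) (fun _ _ => erefl) fv.
by rewrite /= nu_x0 subword_suffix.
Qed.

Definition succ_formula (x0 x z : nat) : formula A :=
  FAnd (FLt A (TVar x0) (TVar x))
       (FNot (FExists z (FAnd (FLt A (TVar x0) (TVar z)) (FLt A (TVar z) (TVar x))))).

Arguments succ_formula : simpl never.

Lemma sat_succ_formula w nu x0 x z : z != x0 -> z != x -> nu x <= (size w).+1 ->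
  sat w nu (succ_formula x0 x z) <-> nu x = (nu x0).+1.
Proof.
move=> z_x0 z_x le_x /=.
have upd_z i : [/\ upd nu z i x0 = nu x0, upd nu z i x = nu x & upd nu z i z = i].
  by rewrite upd_eq !upd_neq // eq_sym.
split=> [[lt_x0x no_between] | eq_x].
  apply/eqP; rewrite eqn_leq lt_x0x andbT leqNgt; apply/negP => lt.
  by apply: no_between; exists (nu x0).+1; have [-> -> ->] := upd_z (nu x0).+1; split; lia.
by rewrite eq_x; split=> // [[k [_]]]; have [-> -> ->] := upd_z k; lia.
Qed.

(* The cut is between the consecutive positions x0 and x0.+1: the prefix is w(min, x0.+1) and
   the suffix is w(x0, max). *)
Definition concat_formula f1 f2 : formula A :=
  let x0 := (maxn (max_var f1) (max_var f2)).+1 in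
  FExists x0 (FExists x0.+1 (FAnd (succ_formula x0 x0.+1 x0.+2)
    (FAnd (restrict TMin (TVar x0.+1) (@FPred A) f1)
          (restrict (TVar x0) TMax (shift_pred sl x0.+1) f2)))).

Lemma free_shift_pred x L t y :
  free_in y (shift_pred sl x L t) -> (x == y) || term_free y t.
Proof.
by rewrite /shift_pred; elim: (sl L) => //= q qs IH /orP [-> | /IH].
Qed.

Lemma preds_in_shift_pred x L t : G L -> preds_in G (shift_pred sl x L t).
Proof.
move=> /slP [Gsl _ _]; rewrite /shift_pred.
elim: (sl L) Gsl => //= q qs IH Gqs; split; first exact: Gqs q (or_introl erefl).
by apply: IH => q' in_q'; apply: Gqs; right.
Qed.

Lemma sentence_concat_formula f1 f2 :
  sentence f1 -> sentence f2 -> sentence (concat_formula f1 f2).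
Proof.
move=> cl1 cl2 y; set x0 := (maxn (max_var f1) (max_var f2)).+1.
apply/negP => /= /andP [x0y /andP [xy /orP [succ | /orP [r1 | r2]]]].
- by move: succ; rewrite /= (negbTE x0y) (negbTE xy) /=; case: eqP.
- have := free_restrict (lo := TMin) (hi := TVar x0.+1) (tp := @FPred A) isT xy (fun _ _ => id) r1.
  by rewrite (negbTE (cl1 y)).
- have tp_free L t : free_in y (shift_pred sl x0.+1 L t) -> term_free y t.
    by move=> /free_shift_pred /orP [/eqP xy' | //]; rewrite xy' eqxx in xy.
  have := free_restrict (lo := TVar x0) (hi := TMax) (tp := shift_pred sl x0.+1)
    x0y isT tp_free r2.
  by rewrite (negbTE (cl2 y)).
Qed.

End Concat.

Lemma shift_cover_choice :
  exists sl : lang A -> seq (lang A * lang A), forall L, G L -> shift_cover G L (sl L).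
Proof.
have ex_sl L : exists sl, G L -> shift_cover G L sl.
  case: (classic (G L)) => [GL | nGL]; last by exists [::].
  by have [sl ?] := shift_cover_exists HG GL; exists sl.
exists (fun L => proj1_sig (constructive_indefinite_description _ (ex_sl L))).
by move=> L; case: constructive_indefinite_description.
Qed.

Lemma FO_concat L1 L2 : FO_def G L1 -> FO_def G L2 -> FO_def G (lang_concat L1 L2).
Proof.
move=> [f1 [cl1 [G1 def1]]] [f2 [cl2 [G2 def2]]]; have [sl slP] := shift_cover_choice.
exists (concat_formula sl f1 f2); split; first exact: sentence_concat_formula.
split.
  split; first by rewrite /=.
  split; first exact: preds_in_restrict G1.
  by apply: preds_in_restrict G2 => L t; apply: preds_in_shift_pred.
move=> w; rewrite lang_concatP.
set x0 := (maxn (max_var f1) (max_var f2)).+1.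
have lt1 : max_var f1 < x0.+1 by rewrite /x0; lia.
have lt2 : max_var f2 < x0 by rewrite /x0; lia.
pose nu i0 i := upd (upd (fun _ => 0) x0 i0) x0.+1 i.
have nu_x0 i0 i : nu i0 i x0 = i0 by rewrite /nu upd_neq ?upd_eq // ltn_eqF.
have nu_x i0 i : nu i0 i x0.+1 = i by rewrite /nu upd_eq.
have succ_nu i0 i : i <= (size w).+1 ->
    sat w (nu i0 i) (succ_formula x0 x0.+1 x0.+2) <-> i = i0.+1.
  by move=> le_i; rewrite sat_succ_formula ?nu_x0 ?nu_x // ?gtn_eqF.
split=> [[p le_p [/def1 s1 /def2 s2]] | [i0 [le_i0 [i [le_i [succ [r1 r2]]]]]]].
  exists p; split; first lia; exists p.+1; split; first lia.
  split; first by rewrite succ_nu; lia.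
  split; first exact/(sat_restrict_prefix lt1 cl1 (nu_x p p.+1) le_p).
  exact/(sat_restrict_suffix slP lt2 cl2 G2 (nu_x0 p p.+1) (nu_x p p.+1) le_p).
move/(succ_nu _ _ le_i): succ => eq_i; rewrite {}eq_i in le_i r1 r2.
have le_i0w : i0 <= size w by lia.
exists i0 => //; rewrite def1 def2; split.
  exact/(sat_restrict_prefix lt1 cl1 (nu_x i0 i0.+1) le_i0w).
exact/(sat_restrict_suffix slP lt2 cl2 G2 (nu_x0 i0 i0.+1) (nu_x i0 i0.+1) le_i0w).
Qed.

Lemma SF_in_FO L : SF G L -> FO_def G L.
Proof.
elim=> {L} [L /FO_base // | a | L1 L2 _ FO1 _ FO2 | L _ FO_L | L1 L2 _ FO1 _ FO2].
- exact: FO_letter.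
- exact: FO_union.
- exact: FO_compl.
- exact: FO_concat.
Qed.

End FOClosure.

Theorem corollary6p6 (A : finType) (G : lang A -> Prop) :
  group_prevariety G ->
  forall L : lang A, SF G L <-> FO_def G L.
Proof. by move=> HG L; split; [apply: SF_in_FO | apply: FO_in_SF]. Qed.
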